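(* Let $\mathcal V$ be a descent category, $k$ a positive integer, and $X$ a $k$-category in $\mathcal V$. Then $X$ is $(k+1)$-coskeletal: for every $n\ge0$ the natural morphism $X_n\to\mathrm{Map}(\mathrm{sk}_{k+1}\Delta^n,X)$ is an isomorphism.
   Context: A descent category is a small category $\mathcal V$ with a subcategory of morphisms called covers such that: $\mathcal V$ has finite limits; pullbacks of covers are covers; if $f$ and $g\circ f$ are covers then $g$ is a cover. A simplicial space is a simplicial object in $\mathcal V$; for a finite simplicial set $T$, $\mathrm{Map}(T,X)$ is the finite limit representing simplicial maps $T\to X$; $\mathrm{sk}_{j}\Delta^n$ is the $j$-skeleton. $\Lambda^n_i=\bigcup_{j\ne i}\partial_j\Delta^n$. $\boldsymbol\Delta^1$ is the nerve of the groupoid with objects $\{0,1\}$ and exactly one morphism between any two objects, and $\mathrm{Map}(\boldsymbol\Delta^1,X)$ the limit representing simplicial maps $\boldsymbol\Delta^1\to X$. A $k$-category is a simplicial space $X$ such that $X_n\to\mathrm{Map}(\Lambda^n_i,X)$ is a cover for $0<i<n$ and an isomorphism for $n>k$, and $\mathrm{Map}(\boldsymbol\Delta^1,X)\to X_0$ (restriction to a vertex) is a cover. *)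

From mathcomp Require Import all_boot.

Set Implicit Arguments.
Unset Strict Implicit.
Unset Printing Implicit Defensive.

Record Cat := {
  Ob :> Type;
  Hom : Ob -> Ob -> Type;
  idm : forall a, Hom a a;
  comp : forall a b c, Hom b c -> Hom a b -> Hom a c;
  comp_id_l : forall a b (f : Hom a b), comp (idm b) f = f;
  comp_id_r : forall a b (f : Hom a b), comp f (idm a) = f;
  comp_assoc : forall a b c d (h : Hom c d) (g : Hom b c) (f : Hom a b),
      comp h (comp g f) = comp (comp h g) f
}.

Arguments Hom {C} : rename.
Arguments idm {C} a : rename.
Arguments comp {C a b c} : rename.

Definition is_iso (C : Cat) (a b : C) (f : Hom a b) : Prop :=
  exists g : Hom b a, comp g f = idm a /\ comp f g = idm b.

Definition is_terminal (C : Cat) (t : C) : Prop :=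
  forall a : C, exists! h : Hom a t, True.

Definition is_pullback (C : Cat) (A B Z P : C) (f : Hom A Z) (g : Hom B Z)
  (p1 : Hom P A) (p2 : Hom P B) : Prop :=
  comp f p1 = comp g p2 /\
  forall (U : C) (u1 : Hom U A) (u2 : Hom U B), comp f u1 = comp g u2 ->
    exists! h : Hom U P, comp p1 h = u1 /\ comp p2 h = u2.

Definition has_finite_limits (C : Cat) : Prop :=
  (exists t : C, is_terminal t) /\
  forall (A B Z : C) (f : Hom A Z) (g : Hom B Z),
    exists (P : C) (p1 : Hom P A) (p2 : Hom P B), is_pullback f g p1 p2.

Record DescentCat := {
  dcat :> Cat;
  cover : forall a b : dcat, Hom a b -> Prop;
  dcat_finlim : has_finite_limits dcat;
  cover_id : forall a : dcat, cover (idm a);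
  cover_comp : forall (a b c : dcat) (g : Hom b c) (f : Hom a b),
      cover f -> cover g -> cover (comp g f);
  cover_pullback : forall (A B Z P : dcat) (f : Hom A Z) (g : Hom B Z)
      (p1 : Hom P A) (p2 : Hom P B),
      is_pullback f g p1 p2 -> cover f -> cover p2;
  cover_cancel : forall (a b c : dcat) (g : Hom b c) (f : Hom a b),
      cover f -> cover (comp g f) -> cover g
}.

Arguments cover {d a b} : rename.

(* The simplex category: monotone maps [m] -> [n], [m] = 'I_m.+1       *)

Record mono (m n : nat) := Mono {
  mfun :> 'I_m.+1 -> 'I_n.+1;
  mfun_homo : {homo mfun : x y / (x <= y)%N}
}.

Definition mono_id (n : nat) : mono n n := @Mono n n id (fun x y h => h).

Definition mono_comp (k m n : nat) (f : mono m n) (g : mono k m) : mono k n :=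
  @Mono k n (fun x => f (g x))
    (fun x y h => mfun_homo f (mfun_homo g h)).

Record sobj (C : Cat) := {
  sob :> nat -> C;
  sact : forall m n, mono m n -> Hom (sob n) (sob m);
  sact_id : forall n, sact (mono_id n) = idm (sob n);
  sact_comp : forall k m n (f : mono m n) (g : mono k m),
      sact (mono_comp f g) = comp (sact g) (sact f)
}.

Arguments sact {C} s {m n} : rename.

Record sset := {
  simp : nat -> Type;
  ract : forall m m', mono m' m -> simp m -> simp m'
}.

Arguments ract s {m m'} : rename.

(* Sub-simplicial sets of Delta^n determined by a downward closed family Q
   of faces (vertex sets): the m-simplices are the monotone maps
   [m] -> [n] whose image is in Q. *)
Definition mimage (m n : nat) (f : mono m n) : {set 'I_n.+1} :=
  [set f x | x : 'I_m.+1].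

Lemma mimage_comp (k m n : nat) (f : mono m n) (g : mono k m) :
  mimage (mono_comp f g) \subset mimage f.
Proof.
apply/subsetP => y /imsetP [x _ ->]; apply/imsetP; by exists (g x).
Qed.

Definition down_closed (n : nat) (Q : {set 'I_n.+1} -> bool) : Prop :=
  forall A B : {set 'I_n.+1}, B \subset A -> Q A -> Q B.

Definition sub_std (n : nat) (Q : {set 'I_n.+1} -> bool)
  (HQ : down_closed Q) : sset :=
  {| simp := fun m => {f : mono m n | Q (mimage f)};
     ract := fun m m' g s =>
       exist _ (mono_comp (sval s) g)
         (HQ _ _ (mimage_comp (sval s) g) (svalP s)) |}.

(* j-skeleton of Delta^n: faces with at most j+1 vertices *)
Definition skel_pred (n j : nat) (A : {set 'I_n.+1}) : bool := (#|A| <= j.+1)%N.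
Arguments skel_pred : clear implicits.

Lemma skel_closed n j : down_closed (skel_pred n j).
Proof.
move=> A B sBA; rewrite /skel_pred => h; exact: leq_trans (subset_leq_card sBA) h.
Qed.

Definition skel (j n : nat) : sset := sub_std (@skel_closed n j).

(* horn Lambda^n_i = union of the faces d_j Delta^n, j <> i
   (d_j Delta^n = faces missing the vertex j) *)
Definition horn_pred (n : nat) (i : 'I_n.+1) (A : {set 'I_n.+1}) : bool :=
  [exists j : 'I_n.+1, (j != i) && (j \notin A)].
Arguments horn_pred : clear implicits.

Lemma horn_closed n i : down_closed (horn_pred n i).
Proof.
move=> A B sBA /existsP [j /andP [ji jA]]; apply/existsP; exists j.
rewrite ji /=; apply/negP => jB; move/negP: jA; apply; exact: (subsetP sBA).
Qed.

Definition horn (n : nat) (i : 'I_n.+1) : sset := sub_std (@horn_closed n i).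

Definition sub_incl (n : nat) (Q : {set 'I_n.+1} -> bool) (HQ : down_closed Q)
  (m : nat) (s : simp (sub_std HQ) m) : mono m n := sval s.

(* bold Delta^1: nerve of the groupoid with objects {0,1} and exactly one
   morphism between any two objects; its m-simplices are all maps
   [m] -> {0,1} *)
Definition bDelta1 : sset :=
  {| simp := fun m => 'I_m.+1 -> 'I_2;
     ract := fun m m' g s => fun x => s (g x) |}.

Definition bvertex0 : simp bDelta1 0 := fun _ => ord0.

(* Map(T, X) as the finite limit representing simplicial maps T -> X  *)

(* a simplicial map T -> Hom(U, X_.) , i.e. a cone with vertex U *)
Definition is_scone (C : Cat) (X : sobj C) (T : sset) (U : C)
  (c : forall m, simp T m -> Hom U (X m)) : Prop :=
  forall m m' (g : mono m' m) (s : simp T m),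
    c m' (ract T g s) = comp (sact X g) (c m s).
Arguments is_scone {C} X {T U} c.

Definition is_Map (C : Cat) (X : sobj C) (T : sset) (M : C)
  (pi : forall m, simp T m -> Hom M (X m)) : Prop :=
  is_scone X pi /\
  forall (U : C) (c : forall m, simp T m -> Hom U (X m)), is_scone X c ->
    exists! h : Hom U M, forall m s, comp (pi m s) h = c m s.
Arguments is_Map {C} X {T M} pi.

(* h : X_n -> Map(T, X) is the natural morphism induced by the inclusion
   T = sub_std HQ  ⊆  Delta^n *)
Definition is_natmap (C : Cat) (X : sobj C) (n : nat)
  (Q : {set 'I_n.+1} -> bool) (HQ : down_closed Q) (M : C)
  (pi : forall m, simp (sub_std HQ) m -> Hom M (X m)) (h : Hom (X n) M) : Prop :=
  forall m s, comp (pi m s) h = sact X (sub_incl s).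
Arguments is_natmap {C X n Q} HQ {M} pi h.

Definition is_kcat (V : DescentCat) (k : nat) (X : sobj V) : Prop :=
  (forall (n : nat) (i : 'I_n.+1), (0 < i)%N -> (i < n)%N ->
     forall (M : V) pi (h : Hom (X n) M),
       is_Map X pi -> is_natmap (@horn_closed n i) pi h ->
       cover h /\ ((k < n)%N -> is_iso h)) /\
  (forall (M : V) (pi : forall m, simp bDelta1 m -> Hom M (X m)),
     is_Map X pi -> cover (pi 0%N bvertex0)).

(* For n <= k + 1 the (k+1)-skeleton is all of Delta^n; for larger n we show, by
   strong induction, that every cone on sk_{k+1} Delta^n from any object U extends
   uniquely to a map U -> X_n, which applied to U = X_n and U = Map(sk_{k+1} Delta^n, X)
   makes the natural map invertible.  The faces of such a cone are cones on
   sk_{k+1} Delta^(n-1), hence extend to simplices y_j; these agree on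
   codimension-two faces by uniqueness in dimension n - 2, so they glue to a cone on
   the horn Lambda^n_1.  Since n > k, restriction to that horn is an isomorphism,
   which yields the extension, and uniqueness holds because an n-simplex is then
   determined by its faces. *)

From Pilot Require Import Defs.
From mathcomp Require Import all_boot zify.
From Stdlib Require Import FunctionalExtensionality ProofIrrelevance.

Set Implicit Arguments.
Unset Strict Implicit.
Unset Printing Implicit Defensive.

Local Notation comp := Defs.comp (only parsing).

Lemma mono_eq m n (f g : mono m n) : f =1 g -> f = g.
Proof.
case: f g => [f hf] [g hg] /= /functional_extensionality fg.
by subst g; congr Mono; apply: proof_irrelevance.
Qed.

Lemma mono_compA k l m n (f : mono m n) (g : mono l m) (h : mono k l) :
  mono_comp f (mono_comp g h) = mono_comp (mono_comp f g) h.
Proof. exact: mono_eq. Qed.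

Lemma mono_comp_idl m n (f : mono m n) : mono_comp (mono_id n) f = f.
Proof. exact: mono_eq. Qed.

Lemma mimage_comp_imset k m n (f : mono m n) (g : mono k m) :
  mimage (mono_comp f g) = f @: mimage g.
Proof. by rewrite /mimage -imset_comp. Qed.

Lemma notin_mimage m n (f : mono m n) j : (j \notin mimage f) = [forall x, f x != j].
Proof.
apply/negP/forallP => [fj x | fj /imsetP [x _ jfx]].
  by apply: contra_not_neq fj => <-; apply: imset_f.
by move: (fj x); rewrite jfx eqxx.
Qed.

Lemma notin_mimage_comp m m' n (f : mono m n) (g : mono m' m) j :
  j \notin mimage f -> j \notin mimage (mono_comp f g).
Proof. by apply: contra; apply: subsetP; apply: mimage_comp. Qed.

Lemma exists_notin_mimage m n (f : mono m n) :
  (#|mimage f| < n.+1)%N -> exists j, j \notin mimage f.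
Proof.
move=> small; apply/existsP; rewrite -negb_forall; apply: contraL small => /forallP fullf.
rewrite -leqNgt -[X in (X <= _)%N]card_ord; apply/subset_leq_card/subsetP => j _.
exact: fullf.
Qed.

Lemma lift_homo N (j : 'I_N.+2) : {homo lift j : x y / (x <= y)%N}.
Proof. by move=> x y /= le; rewrite /bump; case: (leqP j x); case: (leqP j y) => /= ? ?; lia. Qed.

Definition dface N (j : 'I_N.+2) : mono N N.+1 := Mono (@lift_homo N j).

(* A monotone retraction of [lift j]; the [minn] only matters at [p = j = N.+1]. *)
Definition dret N (j p : 'I_N.+2) : 'I_N.+1 := inord (minn (unbump j p) N).

Lemma dret_homo N (j : 'I_N.+2) : {homo dret j : x y / (x <= y)%N}.
Proof.
move=> x y le; rewrite /dret !inordK ?ltnS ?geq_minr //.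
have : (unbump j x <= unbump j y)%N.
  by rewrite /unbump; case: (ltnP j x); case: (ltnP j y) => /= ? ?; lia.
lia.
Qed.

Lemma dretK N (j : 'I_N.+2) : cancel (lift j) (dret j).
Proof.
move=> i; apply: val_inj; rewrite /dret /= bumpK inordK ?ltnS ?geq_minr //.
by apply/minn_idPl; rewrite -ltnS.
Qed.

Lemma lift_dret N (j p : 'I_N.+2) : p != j -> lift j (dret j p) = p.
Proof.
move=> pj; apply: val_inj; rewrite /= /dret inordK ?ltnS ?geq_minr //.
have hp := ltn_ord p; have hj := ltn_ord j; move: pj; rewrite -val_eqE /= /bump /unbump => pj.
case: (ltnP j p) => jp; rewrite /= ?subn0.
  have -> : minn (p - 1) N = p - 1 by apply/minn_idPl; lia.
  by case: leqP; lia.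
have -> : minn p N = p by apply/minn_idPl; lia.
by case: leqP; lia.
Qed.

Definition dfactor N (j : 'I_N.+2) m (f : mono m N.+1) : mono m N :=
  @Mono m N (fun x => dret j (f x)) (fun x y le => dret_homo j (mfun_homo f le)).

Lemma dfactorK N (j : 'I_N.+2) m (f : mono m N.+1) :
  j \notin mimage f -> mono_comp (dface j) (dfactor j f) = f.
Proof. by rewrite notin_mimage => /forallP fj; apply: mono_eq => x /=; apply: lift_dret. Qed.

Lemma dfactor_comp N (j : 'I_N.+2) m m' (f : mono m N.+1) (g : mono m' m) :
  dfactor j (mono_comp f g) = mono_comp (dfactor j f) g.
Proof. exact: mono_eq. Qed.

Lemma dfactor_dface N (j : 'I_N.+2) m (g : mono m N) :
  dfactor j (mono_comp (dface j) g) = g.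
Proof. by apply: mono_eq => x /=; apply: dretK. Qed.

Lemma card_mimage_dface N (j : 'I_N.+2) m (g : mono m N) :
  #|mimage (mono_comp (dface j) g)| = #|mimage g|.
Proof. by rewrite mimage_comp_imset card_imset //; apply: lift_inj. Qed.

Lemma notin_mimage_dface N (j : 'I_N.+2) m (g : mono m N) :
  j \notin mimage (mono_comp (dface j) g).
Proof. by rewrite notin_mimage; apply/forallP => x /=; rewrite eq_sym neq_lift. Qed.

Lemma skel_pred_dface N r (j : 'I_N.+2) m (g : mono m N) :
  skel_pred N r (mimage g) -> skel_pred N.+1 r (mimage (mono_comp (dface j) g)).
Proof. by rewrite /skel_pred card_mimage_dface. Qed.

Lemma skel_pred_dfactor N r (j : 'I_N.+2) m (f : mono m N.+1) : j \notin mimage f ->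
  skel_pred N.+1 r (mimage f) -> skel_pred N r (mimage (dfactor j f)).
Proof. by move=> jf; rewrite /skel_pred -(card_mimage_dface j) dfactorK. Qed.

Lemma skel_pred_comp n r m m' (f : mono m n) (g : mono m' m) :
  skel_pred m r (mimage g) -> skel_pred n r (mimage (mono_comp f g)).
Proof. by rewrite /skel_pred mimage_comp_imset; apply: leq_trans; apply: leq_imset_card. Qed.

Lemma lift_notin_mimage_dface2 N (j : 'I_N.+3) (j' : 'I_N.+2) :
  lift j j' \notin mimage (mono_comp (dface j) (dface j')).
Proof.
rewrite notin_mimage; apply/forallP => x /=.
by rewrite (inj_eq (@lift_inj _ j)) eq_sym neq_lift.
Qed.

Lemma horn_pred_dface2 N (i j : 'I_N.+3) (j' : 'I_N.+2) :
  horn_pred N.+2 i (mimage (mono_comp (dface j) (dface j'))).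
Proof.
apply/existsP; case: (eqVneq j i) => [<- | ji]; last by exists j; rewrite ji notin_mimage_dface.
by exists (lift j j'); rewrite eq_sym neq_lift lift_notin_mimage_dface2.
Qed.

Section Cones.
Variables (C : Cat) (X : sobj C).

Local Notation act g x := (comp (sact X g) x).

(* [pcone]/[is_pMap] restate [is_scone]/[is_Map] for [sub_std], indexing a simplex by
   a monotone map and a proof that its image satisfies [P]; [P] need not be down-closed. *)
Definition pcone n (P : {set 'I_n.+1} -> bool) (U : C)
  (c : forall m (f : mono m n), P (mimage f) -> Hom U (X m)) : Prop :=
  forall m m' (g : mono m' m) (f : mono m n) (H : P (mimage f))
    (H' : P (mimage (mono_comp f g))),
    c m' (mono_comp f g) H' = act g (c m f H).

Definition is_pMap n (P : {set 'I_n.+1} -> bool) (M : C)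
  (pi : forall m (f : mono m n), P (mimage f) -> Hom M (X m)) : Prop :=
  pcone pi /\ forall U c, @pcone n P U c ->
    exists! h : Hom U M, forall m f H, comp (pi m f H) h = c m f H.
Arguments is_pMap {n} P M pi.

Definition is_pnatmap n (P : {set 'I_n.+1} -> bool) M
  (pi : forall m (f : mono m n), P (mimage f) -> Hom M (X m)) (h : Hom (X n) M) :=
  forall m f H, comp (pi m f H) h = sact X f.

Definition extends n (P : {set 'I_n.+1} -> bool) (U : C) : Prop :=
  forall c, @pcone n P U c -> exists! x : Hom U (X n), forall m f H, act f x = c m f H.
Arguments extends {n} P U.

Lemma pfam_irr n (P : {set 'I_n.+1} -> bool) (T : nat -> Type)
  (c : forall m (f : mono m n), P (mimage f) -> T m) m f H H' : c m f H = c m f H'.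
Proof. by rewrite (bool_irrelevance H H'). Qed.

Lemma pfam_congr n (P : {set 'I_n.+1} -> bool) (T : nat -> Type)
  (c : forall m (f : mono m n), P (mimage f) -> T m) m f g H H' :
  f = g -> c m f H = c m g H'.
Proof. by move=> fg; subst g; apply: (pfam_irr c). Qed.

Lemma pcone_comp n (P : {set 'I_n.+1} -> bool) U V c (u : Hom V U) :
  pcone c -> @pcone n P V (fun m f H => comp (c m f H) u).
Proof. by move=> Hc m m' g f H H'; rewrite (Hc _ _ _ _ H) comp_assoc. Qed.

Lemma pcone_weaken n (P Q : {set 'I_n.+1} -> bool) (QP : forall B, Q B -> P B) U c :
  @pcone n P U c -> pcone (fun m f H => c m f (QP _ H)).
Proof. by move=> Hc m m' g f H H'; apply: Hc. Qed.

Definition restr_cone n (P : {set 'I_n.+1} -> bool) U (x : Hom U (X n)) :=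
  fun m (f : mono m n) (_ : P (mimage f)) => act f x.
Arguments restr_cone {n} P {U} x.

Lemma restr_cone_pcone n (P : {set 'I_n.+1} -> bool) U (x : Hom U (X n)) :
  pcone (restr_cone P x).
Proof. by move=> m m' g f H H'; rewrite /restr_cone sact_comp comp_assoc. Qed.

Lemma pMap_hom_eq n (P : {set 'I_n.+1} -> bool) M pi :
  is_pMap P M pi -> forall U (h1 h2 : Hom U M),
  (forall m f H, comp (pi m f H) h1 = comp (pi m f H) h2) -> h1 = h2.
Proof.
move=> [Hpi Hu] U h1 h2 E.
have [h [_ Uq]] := Hu U _ (pcone_comp h1 Hpi).
by rewrite -(Uq h1 (fun _ _ _ => erefl)) (Uq h2 (fun m f H => esym (E m f H))).
Qed.

Lemma extends_eq n (P : {set 'I_n.+1} -> bool) U (x x' : Hom U (X n)) :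
  extends P U -> (forall m (f : mono m n), P (mimage f) -> act f x = act f x') ->
  x = x'.
Proof.
move=> HP E; have [y [_ Uq]] := HP _ (restr_cone_pcone (P := P) x).
by rewrite -(Uq x) //; apply: Uq => m f H; rewrite /restr_cone E.
Qed.

Lemma extends_of_iso n (P : {set 'I_n.+1} -> bool) M pi h :
  is_pMap P M pi -> is_pnatmap pi h -> is_iso h -> forall U, extends P U.
Proof.
move=> HM Hn [g [gh hg]] U c Hc.
have [u [Hu Uq]] := HM.2 U c Hc.
exists (comp g u); split=> [m f H | x Hx].
  by rewrite -(Hn m f H) -comp_assoc (comp_assoc h g u) hg comp_id_l.
have -> : u = comp h x by apply: Uq => m f H; rewrite comp_assoc Hn Hx.
by rewrite comp_assoc gh comp_id_l.
Qed.

Lemma iso_of_extends n (P : {set 'I_n.+1} -> bool) M pi h :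
  is_pMap P M pi -> is_pnatmap pi h -> extends P M -> extends P (X n) -> is_iso h.
Proof.
move=> HM Hn EM EX; have [g [Hg _]] := EM pi HM.1.
exists g; split; last first.
  by apply: (pMap_hom_eq HM) => m f H; rewrite comp_assoc Hn Hg comp_id_r.
apply: (extends_eq EX) => m f H.
by rewrite comp_id_r comp_assoc Hg Hn.
Qed.

Lemma pMap_of_Map n (Q : {set 'I_n.+1} -> bool) (HQ : down_closed Q) M
  (pi : forall m, simp (sub_std HQ) m -> Hom M (X m)) :
  is_Map X pi -> is_pMap Q M (fun m f H => pi m (exist _ f H)).
Proof.
move=> [Hs Hu]; split.
  move=> m m' g f H H'.
  by rewrite -(Hs m m' g (exist _ f H)); congr (pi _ (exist _ _ _)); apply: bool_irrelevance.
move=> U c Hc.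
have Hs' : is_scone X (T := sub_std HQ) (fun m s => c m (sval s) (proj2_sig s)).
  by move=> m m' g [f H] /=; apply: Hc.
have [h [Hh Uq]] := Hu U _ Hs'.
exists h; split=> [m f H | h' Hh']; first exact: (Hh m (exist _ f H)).
by apply: Uq => m [f H]; apply: Hh'.
Qed.

Lemma Map_of_pMap n (Q : {set 'I_n.+1} -> bool) (HQ : down_closed Q) M
  (pi : forall m (f : mono m n), Q (mimage f) -> Hom M (X m)) :
  is_pMap Q M pi -> is_Map X (T := sub_std HQ) (fun m s => pi m (sval s) (proj2_sig s)).
Proof.
move=> [Hs Hu]; split=> [m m' g [f H] | U c Hc]; first exact: Hs.
have Hc' : pcone (fun m f H => c m (exist _ f H)).
  move=> m m' g f H H'.
  by rewrite -(Hc m m' g (exist _ f H)); congr (c _ (exist _ _ _)); apply: bool_irrelevance.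
have [h [Hh Uq]] := Hu U _ Hc'.
exists h; split=> [m [f H] | h' Hh']; first exact: Hh.
by apply: Uq => m f H; apply: (Hh' m (exist _ f H)).
Qed.

End Cones.
Arguments pcone {C} X {n P U} c.
Arguments is_pMap {C} X {n} P M pi.
Arguments extends {C} X {n} P U.

Definition orb_case (b1 b2 : bool) (A : Type) (F1 : b1 -> A) (F2 : b2 -> A) :
    b1 || b2 -> A :=
  (if b1 as b return (b -> A) -> b || b2 -> A
   then fun F _ => F isT else fun _ H => F2 H) F1.

Lemma orb_caseE1 (b1 b2 : bool) A (F1 : b1 -> A) (F2 : b2 -> A) H (h1 : b1) :
  orb_case F1 F2 H = F1 h1.
Proof. by move: F1 H h1; case: b1 => F1 H h1 //=; rewrite (bool_irrelevance h1 isT). Qed.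

Lemma orb_caseE2 (b1 b2 : bool) A (F1 : b1 -> A) (F2 : b2 -> A) H (h2 : b2) :
  ~~ b1 -> orb_case F1 F2 H = F2 h2.
Proof. by move: F1 H; case: b1 => F1 H //= _; rewrite (bool_irrelevance H h2). Qed.

Section MapConstruction.
Variables (C : Cat) (X : sobj C).

Definition has_pMap n (P : {set 'I_n.+1} -> bool) := exists M pi, is_pMap X P M pi.

Lemma has_pMap_eq n (P1 P2 : {set 'I_n.+1} -> bool) :
  P1 =1 P2 -> has_pMap P1 -> has_pMap P2.
Proof.
move=> E [M [pi [Hpi Hu]]].
have E21 B : P2 B -> P1 B by rewrite E.
have E12 B : P1 B -> P2 B by rewrite E.
exists M, (fun m f H => pi m f (E21 _ H)); split; first exact: (pcone_weaken E21 Hpi).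
move=> U c Hc; have [u [Hu1 Uq]] := Hu U _ (pcone_weaken E12 Hc).
exists u; split=> [m f H | u' Hu']; first by rewrite Hu1; exact: (pfam_irr c).
apply: Uq => m f H; rewrite (pfam_irr pi _ (E21 _ (E12 _ H))) Hu'.
exact: (pfam_irr c).
Qed.

Lemma has_pMap_empty n (P : {set 'I_n.+1} -> bool) :
  (exists t : C, is_terminal t) -> (forall m (f : mono m n), ~~ P (mimage f)) ->
  has_pMap P.
Proof.
move=> [t Ht] noP; have nP m f H := elimN idP (noP m f) H.
exists t, (fun m f H => False_rect _ (nP m f H)); split=> [m m' g f H | U c _].
  by case: (nP _ _ H).
have [h [_ Uq]] := Ht U; exists h; split=> [m f H | h' _]; last exact: Uq.
by case: (nP _ _ H).
Qed.

Lemma has_pMap_full n : has_pMap (fun _ : {set 'I_n.+1} => true).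
Proof.
exists (X n), (fun m f _ => sact X f); split=> [m m' g f _ _ | U c Hc].
  exact: sact_comp.
exists (c n (mono_id n) isT); split=> [m f H | h' Hh'].
  by rewrite -(Hc _ _ f (mono_id n) isT H) mono_comp_idl.
by rewrite -(Hh' n (mono_id n) isT) sact_id comp_id_l.
Qed.

Lemma has_pMap_face N (P : {set 'I_N.+2} -> bool) (j : 'I_N.+2) :
  (forall B, P B -> j \notin B) ->
  has_pMap (fun B : {set 'I_N.+1} => P (lift j @: B)) -> has_pMap P.
Proof.
move=> Pj [M [pi [Hpi Hu]]].
have toface m (f : mono m N.+1) : P (mimage f) -> P (lift j @: mimage (dfactor j f)).
  by move=> H; rewrite -[lift j @: _]/(dface j @: _) -mimage_comp_imset dfactorK ?Pj.
have offace m (g : mono m N) :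
    P (lift j @: mimage g) -> P (mimage (mono_comp (dface j) g)).
  by rewrite mimage_comp_imset.
exists M, (fun m f H => pi m (dfactor j f) (toface _ _ H)); split.
  by move=> m m' g f H H'; rewrite -(Hpi _ _ g _ (toface _ _ H) (toface _ _ H')).
move=> U c Hc.
have Hc' : pcone X (P := fun B => P (lift j @: B)) (U := U)
    (fun m g H => c m (mono_comp (dface j) g) (offace _ _ H)).
  move=> m m' g2 g H H'; rewrite -(Hc _ _ g2 _ (offace _ _ H) (offace _ _ H')).
  by apply: (pfam_congr c); apply: mono_compA.
have [u [Hu1 Uq]] := Hu U _ Hc'.
exists u; split=> [m f H | u' Hu'].
  by rewrite Hu1; apply: (pfam_congr c); apply: dfactorK; apply: Pj.
apply: Uq => m g H; rewrite -(Hu' _ _ (offace _ _ H)) /=.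
by rewrite (pfam_congr (P := fun B => P (lift j @: B)) pi _ H (dfactor_dface j g)).
Qed.

Section Union.
Variables (n : nat) (P1 P2 : {set 'I_n.+1} -> bool).
Hypotheses (dP1 : down_closed P1) (dP2 : down_closed P2).
Variables (M1 M2 M12 Pb : C).
Variables (pi1 : forall m (f : mono m n), P1 (mimage f) -> Hom M1 (X m))
  (pi2 : forall m (f : mono m n), P2 (mimage f) -> Hom M2 (X m))
  (pi12 : forall m (f : mono m n), P1 (mimage f) && P2 (mimage f) -> Hom M12 (X m)).
Hypotheses (H1 : is_pMap X P1 M1 pi1) (H2 : is_pMap X P2 M2 pi2)
  (H12 : is_pMap X (fun B => P1 B && P2 B) M12 pi12).
Variables (r1 : Hom M1 M12) (r2 : Hom M2 M12) (p1 : Hom Pb M1) (p2 : Hom Pb M2).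
Hypotheses (Hr1 : forall m (f : mono m n) H, comp (@pi12 m f H) r1 = @pi1 m f (proj1 (andP H)))
  (Hr2 : forall m (f : mono m n) H, comp (@pi12 m f H) r2 = @pi2 m f (proj2 (andP H)))
  (pb : is_pullback r1 r2 p1 p2).

Local Notation Por := (fun B => P1 B || P2 B).

Definition union_pi m (f : mono m n) : P1 (mimage f) || P2 (mimage f) -> Hom Pb (X m) :=
  orb_case (fun h => comp (@pi1 m f h) p1) (fun h => comp (@pi2 m f h) p2).

Lemma union_piE1 m (f : mono m n) H (h1 : P1 (mimage f)) : @union_pi m f H = comp (@pi1 m f h1) p1.
Proof. exact: orb_caseE1. Qed.

Lemma union_piE2 m (f : mono m n) H (h2 : P2 (mimage f)) : @union_pi m f H = comp (@pi2 m f h2) p2.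
Proof.
case h1 : (P1 (mimage f)); last by rewrite /union_pi (orb_caseE2 _ _ _ h2) ?h1.
have h12 : P1 (mimage f) && P2 (mimage f) by rewrite h1 h2.
rewrite (union_piE1 _ h1) (pfam_irr pi1 h1 (proj1 (andP h12))).
rewrite (pfam_irr pi2 h2 (proj2 (andP h12))).
by rewrite -Hr1 -Hr2 -!comp_assoc pb.1.
Qed.

Lemma union_pMap : is_pMap X Por Pb union_pi.
Proof.
have P1P12 B (h : P1 B) : P1 B || P2 B by rewrite h.
have P2P12 B (h : P2 B) : P1 B || P2 B by rewrite h orbT.
split=> [m m' g f H H' | U c Hc].
  case h1 : (P1 (mimage f)).
    have h1' := dP1 (mimage_comp f g) h1.
    by rewrite (union_piE1 _ h1) (union_piE1 _ h1') (H1.1 _ _ g f h1) comp_assoc.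
  have h2 : P2 (mimage f) by move: H; rewrite h1.
  have h2' := dP2 (mimage_comp f g) h2.
  by rewrite (union_piE2 _ h2) (union_piE2 _ h2') (H2.1 _ _ g f h2) comp_assoc.
have [u1 [Hu1 Uq1]] := H1.2 U _ (pcone_weaken P1P12 Hc).
have [u2 [Hu2 Uq2]] := H2.2 U _ (pcone_weaken P2P12 Hc).
have E : comp r1 u1 = comp r2 u2.
  apply: (pMap_hom_eq H12) => m f H.
  by rewrite !comp_assoc Hr1 Hr2 Hu1 Hu2; exact: (pfam_irr (P := Por) c).
have [u [[e1 e2] Uqu]] := pb.2 U u1 u2 E.
exists u; split=> [m f H | u' Hu'].
  case h1 : (P1 (mimage f)).
    by rewrite (union_piE1 _ h1) -comp_assoc e1 Hu1; exact: (pfam_irr (P := Por) c).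
  have h2 : P2 (mimage f) by move: H; rewrite h1.
  by rewrite (union_piE2 _ h2) -comp_assoc e2 Hu2; exact: (pfam_irr (P := Por) c).
apply: Uqu; split; symmetry; [apply: Uq1 => m f h | apply: Uq2 => m f h].
  by rewrite comp_assoc -(union_piE1 (P1P12 _ h)) Hu'.
by rewrite comp_assoc -(union_piE2 (P2P12 _ h)) Hu'.
Qed.

End Union.

Lemma has_pMap_union n (P1 P2 : {set 'I_n.+1} -> bool) :
  (forall (A B Z : C) (f : Hom A Z) (g : Hom B Z),
      exists (P : C) (p1 : Hom P A) (p2 : Hom P B), is_pullback f g p1 p2) ->
  down_closed P1 -> down_closed P2 ->
  has_pMap P1 -> has_pMap P2 -> has_pMap (fun B => P1 B && P2 B) ->
  has_pMap (fun B => P1 B || P2 B).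
Proof.
move=> pbs dP1 dP2 [M1 [pi1 H1]] [M2 [pi2 H2]] [M12 [pi12 H12]].
have [r1 [Hr1 _]] := H12.2 M1 _ (pcone_weaken (fun B h => proj1 (andP h)) H1.1).
have [r2 [Hr2 _]] := H12.2 M2 _ (pcone_weaken (fun B h => proj2 (andP h)) H2.1).
have [Pb [p1 [p2 pb]]] := pbs _ _ _ r1 r2.
by exists Pb, (union_pi pi1 pi2 p1 p2); exact: (union_pMap dP1 dP2 H1 H2 H12 Hr1 Hr2 pb).
Qed.

End MapConstruction.

Definition faces_pred n (J : {set 'I_n.+1}) (B : {set 'I_n.+1}) : bool :=
  [exists j in J, j \notin B].

Lemma faces_pred_closed n (J : {set 'I_n.+1}) : down_closed (faces_pred J).
Proof.
move=> A B sBA /existsP [j /andP [jJ jA]]; apply/existsP; exists j.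
by rewrite jJ; apply: contra jA; apply: subsetP.
Qed.

Lemma notin_closed n (j : 'I_n.+1) : down_closed (fun B => j \notin B).
Proof. by move=> A B sBA; apply: contra; apply: subsetP. Qed.

Lemma faces_predD1 n (J : {set 'I_n.+1}) j B : j \in J ->
  faces_pred J B = faces_pred (J :\ j) B || (j \notin B).
Proof.
move=> jJ; apply/existsP/orP => [[i /andP [iJ iB]] | [/existsP [i] | jB]].
- case: (eqVneq i j) => [ij | ij]; first by right; rewrite -ij.
  by left; apply/existsP; exists i; rewrite in_setD1 ij iJ.
- by rewrite in_setD1 => /andP [/andP [_ iJ] iB]; exists i; rewrite iJ.
- by exists j; rewrite jJ.
Qed.

Lemma notin_lift_imset N (j : 'I_N.+2) (B : {set 'I_N.+1}) : j \notin lift j @: B.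
Proof. by apply/imsetP => [[x _ jx]]; move: (neq_lift j x); rewrite -jx eqxx. Qed.

Lemma faces_pred_lift N (J : {set 'I_N.+2}) j (B : {set 'I_N.+1}) : j \notin J ->
  faces_pred [set i | lift j i \in J] B = faces_pred J (lift j @: B) && (j \notin lift j @: B).
Proof.
move=> jJ; rewrite notin_lift_imset andbT.
apply/existsP/existsP => [[i /andP [] ] | [i /andP [iJ iB]]].
  by rewrite inE => iJ iB; exists (lift j i); rewrite iJ (mem_imset _ _ (@lift_inj _ j)).
have ij : i != j by apply: contraNneq jJ => <-.
exists (dret j i); rewrite inE lift_dret // iJ /=.
by apply: contra iB => iB; rewrite -(lift_dret ij) imset_f.
Qed.

Lemma horn_faces n (i : 'I_n.+1) : horn_pred n i =1 faces_pred [set j | j != i].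
Proof. by move=> B; apply: eq_existsb => j; rewrite inE. Qed.

Section FacesMap.
Variables (C : Cat) (X : sobj C).
Hypothesis terminal : exists t : C, is_terminal t.
Hypothesis pullbacks : forall (A B Z : C) (f : Hom A Z) (g : Hom B Z),
  exists (P : C) (p1 : Hom P A) (p2 : Hom P B), is_pullback f g p1 p2.

(* [Map] of a union of faces is glued from [Map] of a smaller union, of one face
   [X_N], and of their intersection, which is again a union of faces of [Delta^N]. *)
Lemma has_pMap_faces n (J : {set 'I_n.+1}) : has_pMap X (faces_pred J).
Proof.
elim: n J => [|N IH] J.
  apply: has_pMap_empty => // m f; apply/existsP => -[j /andP [_ /imsetP []]].
  by exists ord0; rewrite // (ord1 j) (ord1 (f ord0)).
have [s] := ubnP #|J|; elim: s J => // s IHJ J; rewrite ltnS => cardJ.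
have [J0 | [j jJ]] := set_0Vmem J.
  by apply: has_pMap_empty => // m f; apply/existsP => -[j]; rewrite J0 inE.
apply: has_pMap_eq (fun B => esym (faces_predD1 B jJ)) _.
apply: (has_pMap_union pullbacks (@faces_pred_closed _ (J :\ j)) (@notin_closed _ j)).
- by apply: IHJ; move: cardJ; rewrite (cardsD1 j J) jJ.
- apply: (has_pMap_face (j := j)) => //.
  by apply: has_pMap_eq (has_pMap_full X N) => B; rewrite notin_lift_imset.
- apply: (has_pMap_face (j := j)) => [B /andP [] //|].
  apply: has_pMap_eq (IH [set i | lift j i \in J :\ j]) => B.
  by rewrite faces_pred_lift // in_setD1 eqxx.
Qed.

End FacesMap.

Section Coskeleton.
Variables (C : Cat) (X : sobj C) (k : nat) (U : C).
Hypothesis horn_extends : forall N, (1 < N.+1)%N -> (k < N.+1)%N ->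
  extends X (horn_pred N.+1 (inord 1)) U.

Local Notation act g x := (comp (sact X g) x).
Local Notation skel_extends n := (extends X (skel_pred n k.+1) U).

Lemma act_comp m m' n (f : mono m n) (g : mono m' m) (x : Hom U (X n)) :
  act (mono_comp f g) x = act g (act f x).
Proof. by rewrite sact_comp comp_assoc. Qed.

(* Fillers of horns are unique, and a horn is covered by faces. *)
Lemma dface_inj N : (1 < N.+1)%N -> (k < N.+1)%N ->
  forall x x' : Hom U (X N.+1), (forall j, act (dface j) x = act (dface j) x') -> x = x'.
Proof.
move=> N_gt0 kN x x' E; apply: (extends_eq (horn_extends N_gt0 kN)) => m f.
by case/existsP => j /andP [_ jf]; rewrite -(dfactorK jf) !act_comp E.
Qed.

Lemma skel_extends_small n : (n <= k.+1)%N -> skel_extends n.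
Proof.
move=> nk c Hc.
have Hid : skel_pred n k.+1 (mimage (mono_id n)).
  by apply: leq_trans (max_card _) _; rewrite card_ord.
exists (c n (mono_id n) Hid); split=> [m f H | x Hx].
  have H' : skel_pred n k.+1 (mimage (mono_comp (mono_id n) f)) by rewrite mono_comp_idl.
  by rewrite -(Hc _ _ f _ Hid H'); apply: (pfam_congr c); rewrite mono_comp_idl.
by rewrite -(Hx n (mono_id n) Hid) sact_id comp_id_l.
Qed.

Section Step.
Variable N : nat.
Hypotheses (N_gt0 : (0 < N)%N) (kN : (k < N.+1)%N).
Hypotheses (IH1 : skel_extends N.+1) (IH0 : skel_extends N).

Section Cone.
Variable c : forall m (f : mono m N.+2), skel_pred N.+2 k.+1 (mimage f) -> Hom U (X m).
Arguments c : clear implicits.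
Hypothesis Hc : pcone X c.
Arguments Hc : clear implicits.

Definition face_cone (j : 'I_N.+3) m (g : mono m N.+1)
    (H : skel_pred N.+1 k.+1 (mimage g)) : Hom U (X m) :=
  c m (mono_comp (dface j) g) (skel_pred_dface j H).
Arguments face_cone : clear implicits.

Lemma face_cone_pcone j : pcone X (face_cone j).
Proof.
move=> m m' g2 g H H'.
rewrite /face_cone -(Hc _ _ g2 _ (skel_pred_dface j H) (skel_pred_dface j H')).
by apply: (pfam_congr c); apply: mono_compA.
Qed.

Lemma exists_face_family : exists y : 'I_N.+3 -> Hom U (X N.+1),
  forall j m g H, act g (y j) = face_cone j m g H.
Proof.
have face_ext j : exists y, forall m g H, act g y = face_cone j m g H.
  by have [y [Hy _]] := IH1 (face_cone_pcone j); exists y.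
exact: fin_all_exists face_ext.
Qed.

Section Family.
Variable y : 'I_N.+3 -> Hom U (X N.+1).
Hypothesis Hy : forall j m g H, act g (y j) = face_cone j m g H.
Arguments Hy : clear implicits.

Lemma face_family_unique j y' :
  (forall m g H, act g y' = face_cone j m g H) -> y' = y j.
Proof. by move=> Hy'; apply: (extends_eq IH1) => m g H; rewrite Hy' Hy. Qed.

Lemma face_family_codim2 (e : mono N N.+2) j j' :
  j \notin mimage e -> j' \notin mimage e ->
  act (dfactor j e) (y j) = act (dfactor j' e) (y j').
Proof.
have restr i : i \notin mimage e -> forall m (g : mono m N) H,
    act g (act (dfactor i e) (y i)) = c m (mono_comp e g) (skel_pred_comp e H).
  move=> ie m g H; rewrite -act_comp (Hy _ _ _ (skel_pred_comp _ H)) /face_cone.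
  by apply: (pfam_congr c); rewrite mono_compA dfactorK.
by move=> je j'e; apply: (extends_eq IH0) => m g H; rewrite restr // restr.
Qed.

Lemma face_family_compat m (f : mono m N.+2) j j' :
  j \notin mimage f -> j' \notin mimage f ->
  act (dfactor j f) (y j) = act (dfactor j' f) (y j').
Proof.
move=> jf j'f; have [<- // | jj'] := eqVneq j j'.
set i := dret j j'; have lift_i : lift j i = j' by rewrite lift_dret // eq_sym.
set e := mono_comp (dface j) (dface i).
have j'e : j' \notin mimage e by rewrite -lift_i lift_notin_mimage_dface2.
have ifj : i \notin mimage (dfactor j f).
  rewrite notin_mimage; apply/forallP => x /=; apply: contraNneq j'f => fxi.
  by rewrite -lift_i -fxi lift_dret ?imset_f //; apply: contraNneq jf => <-; apply: imset_f.
set w := dfactor i (dfactor j f).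
have fjw : dfactor j f = mono_comp (dface i) w by rewrite dfactorK.
have few : f = mono_comp e w by rewrite /e -mono_compA -fjw dfactorK.
rewrite few (dfactor_comp j e w) (dfactor_comp j' e w) !act_comp.
by rewrite (face_family_codim2 (j' := j')) ?notin_mimage_dface.
Qed.

Definition missing_vertex m (f : mono m N.+2) : 'I_N.+3 :=
  odflt ord0 [pick j | j \notin mimage f].

Lemma missing_vertexP m (f : mono m N.+2) j :
  j \notin mimage f -> missing_vertex f \notin mimage f.
Proof. by rewrite /missing_vertex; case: pickP => [// | /(_ j) ->]. Qed.

Definition glued_cone m (f : mono m N.+2) (_ : horn_pred N.+2 (inord 1) (mimage f)) :=
  act (dfactor (missing_vertex f) f) (y (missing_vertex f)).

Lemma glued_coneE m f H j :
  j \notin mimage f -> glued_cone (m := m) (f := f) H = act (dfactor j f) (y j).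
Proof. by move=> jf; apply: face_family_compat (missing_vertexP jf) jf. Qed.

Lemma glued_cone_pcone : pcone X glued_cone.
Proof.
move=> m m' g f H H'; case/existsP: (H) => j /andP [_ jf].
rewrite (glued_coneE H jf) (glued_coneE H' (notin_mimage_comp g jf)).
by rewrite dfactor_comp act_comp.
Qed.

Lemma exists_face_filler : exists x : Hom U (X N.+2), forall j, act (dface j) x = y j.
Proof.
have [x [Hx _]] := horn_extends (N := N.+1) isT (ltnW kN) glued_cone_pcone.
exists x => j; apply: dface_inj N_gt0 kN _ _ _ => i.
rewrite -act_comp (Hx _ _ (horn_pred_dface2 _ j i)) (glued_coneE _ (notin_mimage_dface _ _)).
by rewrite dfactor_dface.
Qed.

End Family.

Lemma skel_cone_extends : exists! x : Hom U (X N.+2), forall m f H, act f x = c m f H.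
Proof.
have [y Hy] := exists_face_family; have [x Hx] := exists_face_filler Hy.
exists x; split=> [m f H | x' Hx'].
  have [|j jf] := @exists_notin_mimage _ _ f; first by move: H; rewrite /skel_pred; lia.
  rewrite -{1}(dfactorK jf) act_comp Hx (Hy _ _ _ (skel_pred_dfactor jf H)) /face_cone.
  by apply: (pfam_congr c); rewrite dfactorK.
apply: (@dface_inj N.+1 isT (ltnW kN)) => j.
rewrite Hx; symmetry; apply: (face_family_unique Hy) => m g H.
by rewrite -act_comp (Hx' _ _ (skel_pred_dface j H)).
Qed.

End Cone.

Lemma skel_extends_step : skel_extends N.+2.
Proof. by move=> c Hc; apply: skel_cone_extends. Qed.

End Step.

Lemma skel_extends_all : (0 < k)%N -> forall n, skel_extends n.
Proof.
move=> k_gt0; elim/ltn_ind=> n IH.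
have [nk | kn] := leqP n k.+1; first exact: skel_extends_small.
case: n IH kn => [|[|N]] IH kn; try lia.
by apply: skel_extends_step; [lia | lia | apply: IH | apply: IH].
Qed.

End Coskeleton.

Lemma kcat_horn_extends (V : DescentCat) (k : nat) (X : sobj V) : is_kcat k X ->
  forall (U : V) N, (1 < N.+1)%N -> (k < N.+1)%N -> extends X (horn_pred N.+1 (inord 1)) U.
Proof.
move=> [horn_iso _] U N N_gt0 kN; have [terminal pullbacks] := dcat_finlim V.
have [M [pi Hpi]] : has_pMap X (horn_pred N.+1 (inord 1)).
  exact: has_pMap_eq (fun B => esym (horn_faces _ B)) (has_pMap_faces _ terminal pullbacks _).
have natcone : pcone X (fun m f (_ : horn_pred N.+1 (inord 1) (mimage f)) => sact X f).
  by move=> m m' g f _ _; apply: sact_comp.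
have [h [Hh _]] := Hpi.2 _ _ natcone.
have one_gt0 : (0 < @inord N.+1 1)%N by rewrite inordK.
have one_lt : (@inord N.+1 1 < N.+1)%N by rewrite inordK.
have [_ iso_h] := horn_iso N.+1 (inord 1) one_gt0 one_lt M _ h
  (Map_of_pMap (@horn_closed _ _) Hpi) (fun m s => Hh m (sval s) (proj2_sig s)).
exact: extends_of_iso Hpi Hh (iso_h kN) U.
Qed.

Theorem lemma6p2 (V : DescentCat) (k : nat) (X : sobj V) :
  (0 < k)%N -> is_kcat k X ->
  forall (n : nat) (M : V)
    (pi : forall m, simp (skel k.+1 n) m -> Hom M (X m)) (h : Hom (X n) M),
    is_Map X pi -> is_natmap (@skel_closed n k.+1) pi h -> is_iso h.
Proof.
move=> k_gt0 Xk n M pi h HM Hnat.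
apply: (iso_of_extends (pMap_of_Map HM) (fun m f H => Hnat m (exist _ f H)));
  by apply: skel_extends_all => // N; apply: kcat_horn_extends.
Qed.
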